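(* Fix a positive real number $k$ and set $m=m(n)=\lceil n/k\rceil$. Then the rate $\frac{\log_2|C_{n,m}|}{\binom{n}{2}}$ of the community code $C_{n,m}$ tends to $0$ as $n\to\infty$.
   Context: For integers $n\geq 2$, $N=\binom{n}{2}$ and $1\leq m\leq n$, the community code $C_{n,m}\subseteq\mathbb{F}_2^N$ consists of exactly those binary vectors of length $N$ that are the upper-triangular (off-diagonal) part of the adjacency matrix of a simple undirected graph on the labeled vertex set $\{1,\ldots,n\}$ which is a disjoint union of cliques, each clique having at least $m$ vertices. The rate of $C_{n,m}$ is $\log_2|C_{n,m}|/N$. *)

From HB Require Import structures.
From mathcomp Require Import all_boot all_order all_algebra.
From mathcomp Require Import reals exp.
Set Implicit Arguments. Unset Strict Implicit. Unset Printing Implicit Defensive.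
Import Order.TTheory GRing.Theory Num.Theory.

Definition upair (n : nat) := {p : 'I_n * 'I_n | (p.1 < p.2)%N}.

Definition word (n : nat) := {ffun upair n -> bool}.

(* The community code C_{n,m}: the upper-triangular parts of adjacency matrices of
   graphs on {0..n-1} that are disjoint unions of cliques (the blocks of a partition P
   of the vertex set; two vertices adjacent iff in the same block), each clique having
   at least m vertices. *)
Definition community_code (n m : nat) : {set word n} :=
  [set x : word n | [exists P : {set {set 'I_n}},
     [&& partition P [set: 'I_n],
         [forall B in P, (m <= #|B|)%N] &
         [forall p : upair n,
            x p == (pblock P (val p).1 == pblock P (val p).2)]]]].

Definition rate (R : realType) (n m : nat) : R :=
  (ln (#|community_code n m|%:R : R) / ln 2) / ('C(n, 2))%:R.

Definition mk (R : realType) (k : R) (n : nat) : nat :=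
  `|Num.ceil (n%:R / k)|%N.

From HB Require Import structures.
From mathcomp Require Import all_boot all_order all_algebra.
From mathcomp Require Import reals exp ring lra.
Import Order.TTheory GRing.Theory Num.Theory.

Set Implicit Arguments.
Unset Strict Implicit.
Unset Printing Implicit Defensive.

(* A word of C_{n,m} is determined by the colouring of the vertices by the index
   of their clique. The cliques have at least m vertices, so there are at most
   n / m <= k of them, whence |C_{n,m}| <= (k + 1)^n and the rate is at most
   2 log2 (k + 1) / (n - 1). *)

Lemma partition_card_mul_le (T : finType) (P : {set {set T}}) (m : nat) :
  partition P [set: T] -> {in P, forall B : {set T}, m <= #|B|} -> #|P| * m <= #|T|.
Proof.
move=> partP bigP; rewrite -sum_nat_const -cardsT (card_partition partP).
exact: leq_sum.
Qed.

Lemma card_community_code_le (n m : nat) :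
  0 < m -> #|community_code n m| <= (n %/ m).+1 ^ n.
Proof.
move=> m_gt0; set b := (n %/ m).+1.
pose word_of (f : {ffun 'I_n -> 'I_b}) : word n :=
  [ffun p : upair n => f (val p).1 == f (val p).2].
have -> : b ^ n = #|[set: {ffun 'I_n -> 'I_b}]| by rewrite cardsT card_ffun !card_ord.
apply: leq_trans (leq_imset_card word_of _); apply: subset_leq_card.
apply/subsetP => x; rewrite inE => /existsP [P /and3P [partP /forall_inP bigP /forallP xP]].
have cardP : #|P| < b.
  by rewrite ltnS leq_divRL // -[X in _ <= X](card_ord n) partition_card_mul_le.
have blockP i : pblock P i \in P.
  by apply: pblock_mem; rewrite (cover_partition partP) inE.
pose colour := [ffun i => inord (index (pblock P i) (enum P)) : 'I_b].
have colour_lt i : index (pblock P i) (enum P) < b.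
  by apply: leq_ltn_trans cardP; rewrite cardE index_size.
apply/imsetP; exists colour; rewrite ?inE //.
apply/ffunP => p; rewrite (eqP (xP p)) !ffunE.
apply/eqP/eqP => [-> // | /(congr1 val)].
rewrite /= !inordK // => /(congr1 (nth set0 (enum P))).
by rewrite !nth_index ?mem_enum ?blockP.
Qed.

Local Open Scope ring_scope.

Section RateBound.

Context {R : realType}.

Lemma ln2_gt0 : 0 < ln (2 : R).
Proof. by rewrite ln_gt0 // ltr1n. Qed.

Lemma ceil_natr_ge (x : R) : 0 <= x -> x <= (`|Num.ceil x|%N)%:R.
Proof.
move=> x_ge0; rewrite natr_absz ger0_norm ?ceil_ge //.
by rewrite ceil_ge0; lra.
Qed.

Lemma divn_mk_le (k : R) (n : nat) : 0 < k -> (n %/ mk k n)%:R <= k.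
Proof.
move=> k_gt0; have [->|n_gt0] := posnP n; first by rewrite div0n ltW.
set q := (n %/ mk k n)%N; set x := n%:R / k.
have x_gt0 : 0 < x by rewrite divr_gt0 // ltr0n.
have x_le_mk : x <= (mk k n)%:R by rewrite ceil_natr_ge ?ltW.
have qmk_le : q%:R * (mk k n)%:R <= n%:R :> R by rewrite -natrM ler_nat leq_divM.
have n_eq : n%:R = k * x :> R by rewrite /x mulrC divfK ?gt_eqF.
by rewrite -(ler_pM2r x_gt0) -n_eq (le_trans _ qmk_le) // ler_wpM2l.
Qed.

Lemma mk_gt0 (k : R) (n : nat) : 0 < k -> (0 < n)%N -> (0 < mk k n)%N.
Proof.
move=> k_gt0 n_gt0; have nk_gt0 : 0 < n%:R / k by rewrite divr_gt0 // ltr0n.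
by rewrite -(ltr0n R) /mk (lt_le_trans nk_gt0) // ceil_natr_ge // ltW.
Qed.

Lemma rate_ge0 (n m : nat) : 0 <= rate R n m.
Proof.
have lnC_ge0 : 0 <= ln #|community_code n m|%:R :> R.
  have [->|C_gt0] := posnP #|community_code n m|; first by rewrite ln0.
  by rewrite ln_ge0 // ler1n.
by rewrite /rate !divr_ge0 // ltW // ln2_gt0.
Qed.

Lemma rate_le_of_card (n m b : nat) : (2 <= n)%N -> (0 < b)%N ->
  (#|community_code n m| <= b ^ n)%N ->
  rate R n m <= 2 * (ln b%:R / ln 2) / n.-1%:R.
Proof.
move=> n_ge2 b_gt0 cardC; set C := #|community_code n m|.
have n_gt0 : (0 < n)%N by rewrite ltnW.
have n1_gt0 : (0 < n.-1)%N by rewrite -ltnS prednK.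
have bin2E : 'C(n, 2)%:R = n%:R * n.-1%:R / 2 :> R.
  have bin2_mul2 : ('C(n, 2) * 2 = n * n.-1)%N.
    by rewrite (bin_ffact n 2) ffactnS ffactn1.
  by rewrite -natrM -bin2_mul2 natrM mulfK ?pnatr_eq0.
have lnC_le : ln C%:R <= ln b%:R *+ n :> R.
  have [->|C_gt0] := posnP C; first by rewrite ln0 // mulrn_wge0 // ln_ge0 // ler1n.
  by rewrite -lnXn ?ltr0n // ler_ln ?posrE ?exprn_gt0 ?ltr0n // -natrX ler_nat.
have boundE : 2 * (ln b%:R / ln 2) / n.-1%:R * 'C(n, 2)%:R = ln b%:R *+ n / ln 2 :> R.
  rewrite bin2E -mulr_natr; field.
  by rewrite mul1r gt_eqF ?ln2_gt0 // pnatr_eq0 -lt0n.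
rewrite /rate ler_pdivrMr; last by rewrite ltr0n bin_gt0.
by rewrite boundE ler_pM2r ?invr_gt0 ?ln2_gt0.
Qed.

Lemma rate_mk_le (k : R) (n : nat) : 0 < k -> (2 <= n)%N ->
  rate R n (mk k n) <= 2 * (ln (k + 1) / ln 2) / n.-1%:R.
Proof.
move=> k_gt0 n_ge2; have m_gt0 := mk_gt0 k_gt0 (ltnW n_ge2).
apply: le_trans (rate_le_of_card n_ge2 _ (card_community_code_le n m_gt0)) _ => //.
have n1_gt0 : 0 < n.-1%:R :> R by rewrite ltr0n -ltnS prednK // ltnW.
rewrite ler_pM2r ?invr_gt0 // ler_pM2l // ler_pM2r ?invr_gt0 ?ln2_gt0 //.
by rewrite ler_ln ?posrE ?ltr0n ?addr_gt0 // -natr1 lerD2r divn_mk_le.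
Qed.

End RateBound.

Theorem corollary1 (R : realType) (k : R) (hk : 0 < k) :
  forall eps : R, 0 < eps ->
  exists N : nat, forall n : nat, (N <= n)%N -> (2 <= n)%N -> (mk k n <= n)%N ->
    `|rate R n (mk k n)| < eps.
Proof.
move=> eps eps_gt0; set c := 2 * (ln (k + 1) / ln 2).
have c_ge0 : 0 <= c.
  by rewrite mulr_ge0 // divr_ge0 ?ln_ge0 ?lerDr ?ltW ?ln2_gt0.
exists `|Num.ceil (c / eps)|%N.+2 => n N_le_n n_ge2 _.
have n1_gt0 : 0 < n.-1%:R :> R by rewrite ltr0n -ltnS prednK // ltnW.
have c_lt : c / eps < n.-1%:R.
  apply: le_lt_trans (ceil_natr_ge _) _; first by rewrite divr_ge0 // ltW.
  by rewrite ltr_nat -ltnS prednK // ltnW.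
rewrite ger0_norm ?rate_ge0 //; apply: le_lt_trans (rate_mk_le hk n_ge2) _.
by rewrite ltr_pdivrMr // -/c mulrC -ltr_pdivrMr.
Qed.
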